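(* Let $\mathcal{X}=\{\mathbf{x}_1,\dots,\mathbf{x}_N\}\subset\mathbb{R}^d$, and for weights $\pi=(\pi_1,\dots,\pi_N)$ with $\pi_j>0$, $\sum_j\pi_j=1$, and bandwidths $\sigma\in(0,\infty)^N$ consider the $\pi$-KDE model $p_{\pi\text{-KDE}}(\mathbf{x};\pi,\sigma)=\sum_j\pi_j\mathcal{N}(\mathbf{x};\mathbf{x}_j,\sigma_j^2\mathbf{I})$, with total log-likelihood $L(\pi,\sigma)=\sum_i\log p_{\pi\text{-KDE}}(\mathbf{x}_i;\pi,\sigma)$ and leave-one-out total log-likelihood $L_{\text{LOO}}(\pi,\sigma)=\sum_i\log\sum_{j\ne i}\pi_j\mathcal{N}(\mathbf{x}_i;\mathbf{x}_j,\sigma_j^2\mathbf{I})$. Then: (i) For any index $j'$ and any fixed $\pi$ and fixed $\sigma_j>0$ ($j\ne j'$), $L(\pi,\sigma)\to+\infty$ as $\sigma_{j'}\to0^+$; conversely, if $\sigma_j\ge\varepsilon>0$ for all $j$ then $L(\pi,\sigma)$ is bounded above by a constant depending only on $N,d,\varepsilon$ (uniformly in $\pi$), so $L(\pi^{(n)},\sigma^{(n)})\to+\infty$ forces $\min_j\sigma^{(n)}_j\to0$. (ii) If $N\ge2$ and the points of $\mathcal{X}$ are pairwise distinct, then $L_{\text{LOO}}$ is bounded above on the set of all admissible $(\pi,\sigma)$. (iii) If $N\ge2$ and the points of $\mathcal{X}$ are pairwise distinct, there exists $\varepsilon>0$ depending only on the dataset such that every maximizer $(\pi^*,\sigma^*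 )$ of $L_{\text{LOO}}$ over admissible $(\pi,\sigma)$ satisfies $\sigma^*_j\ge\varepsilon$ for all $j$ (no data-copying).
   Context: $\mathcal{N}(\mathbf{x};\boldsymbol\mu,\sigma^2\mathbf{I})=(2\pi\sigma^2)^{-d/2}\exp\!\big(-\lVert\mathbf{x}-\boldsymbol\mu\rVert^2/(2\sigma^2)\big)$ denotes the isotropic Gaussian density on $\mathbb{R}^d$. The $\pi$-KDE model is a Gaussian mixture with fixed centres at the data points, individual positive weights $\pi_j$ summing to one, and individual bandwidths $\sigma_j$; the adaptive KDE is the special case $\pi_j=1/N$. ''Data-copying'' means that some bandwidth $\sigma_j\to0^+$. *)

From HB Require Import structures.
From mathcomp Require Import all_boot all_order all_algebra.
From mathcomp Require Import all_classical all_reals all_analysis.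
Set Implicit Arguments. Unset Strict Implicit. Unset Printing Implicit Defensive.
Import Order.TTheory GRing.Theory Num.Theory.
Import numFieldNormedType.Exports.
Local Open Scope ring_scope.

(* squared Euclidean norm of a point of R^d (a row vector) *)
Definition sqnorm {R : realType} {d : nat} (v : 'rV[R]_d) : R :=
  \sum_(k < d) (v ord0 k) ^+ 2.

Definition gauss {R : realType} {d : nat} (x mu : 'rV[R]_d) (s : R) : R :=
  (2 * pi * s ^+ 2) `^ (- (d%:R / 2)) * expR (- sqnorm (x - mu) / (2 * s ^+ 2)).

Definition adm_weights {R : realType} {N : nat} (w : 'I_N -> R) : Prop :=
  (forall j, 0 < w j) /\ \sum_(j < N) w j = 1.

Definition adm_bw {R : realType} {N : nat} (s : 'I_N -> R) : Prop :=
  forall j, 0 < s j.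

Definition pkde {R : realType} {d N : nat} (X : 'I_N -> 'rV[R]_d)
  (w s : 'I_N -> R) (x : 'rV[R]_d) : R :=
  \sum_(j < N) w j * gauss x (X j) (s j).

Definition loglik {R : realType} {d N : nat} (X : 'I_N -> 'rV[R]_d)
  (w s : 'I_N -> R) : R :=
  \sum_(i < N) ln (pkde X w s (X i)).

Definition loglik_loo {R : realType} {d N : nat} (X : 'I_N -> 'rV[R]_d)
  (w s : 'I_N -> R) : R :=
  \sum_(i < N) ln (\sum_(j < N | j != i) w j * gauss (X i) (X j) (s j)).

Definition set_bw {R : realType} {N : nat} (s : 'I_N -> R) (j' : 'I_N) (t : R)
  : 'I_N -> R := fun j => if j == j' then t else s j.

From HB Require Import structures.
From mathcomp Require Import all_boot all_order all_algebra.
From mathcomp Require Import all_classical all_reals all_analysis.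
From mathcomp Require Import ring lra.
Set Implicit Arguments. Unset Strict Implicit. Unset Printing Implicit Defensive.
Import Order.TTheory GRing.Theory Num.Theory.
Import numFieldNormedType.Exports.
Local Open Scope classical_set_scope.
Local Open Scope ring_scope.

(* With its own bandwidth free, every data point can put a Gaussian spike of height
   (2 pi s^2)^(-d/2) on itself, so L blows up when one bandwidth tends to 0, whereas
   bandwidths bounded below by eps bound every density by (2 pi eps^2)^(-d/2).
   Leaving the point out removes the spike: a Gaussian evaluated at squared distance
   D > 0 from its centre is at most its value at the optimal bandwidth s^2 = D/d, which
   bounds L_LOO.  Below that optimum the value grows with the bandwidth, so once
   d eps^2 is smaller than every squared pairwise distance, raising a bandwidth below
   eps up to eps strictly increases all the other leave-one-out terms and leaves its
   own unchanged; hence no maximiser of L_LOO has a bandwidth below eps. *)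

Lemma ln_le_subr1 (R : realType) (y : R) : 0 < y -> ln y <= y - 1.
Proof. by move=> y0; have := @le_ln1Dx R (y - 1); rewrite addrCA subrr addr0; apply; lra. Qed.

Lemma ler_sum_term (R : numDomainType) (I : finType) (P : pred I) (F : I -> R) (i : I) :
  (forall j, P j -> 0 <= F j) -> P i -> F i <= \sum_(j | P j) F j.
Proof.
move=> F_ge0 Pi; rewrite (bigD1 i) //= lerDl sumr_ge0 // => j /andP[Pj _].
exact: F_ge0.
Qed.

Lemma ln_mixture_le (R : realType) (I : finType) (P : pred I) (w F : I -> R) (M : R) :
  0 <= M -> (forall i, P i -> 0 <= w i) -> \sum_(i | P i) w i <= 1 ->
  (forall i, P i -> F i <= M) -> ln (\sum_(i | P i) w i * F i) <= M.
Proof.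
move=> M0 w_ge0 sum_w_le1 F_le.
have mix_le : \sum_(i | P i) w i * F i <= M.
  apply: (@le_trans _ _ (\sum_(i | P i) w i * M)).
    by apply: ler_sum => i Pi; rewrite ler_wpM2l ?w_ge0 ?F_le.
  by rewrite -mulr_suml -[leRHS]mul1r ler_wpM2r.
have [mix_le0|mix_gt0] := leP (\sum_(i | P i) w i * F i) 0; first by rewrite ln0.
exact: le_trans (ltW (ln_sublinear mix_gt0)) mix_le.
Qed.

Lemma finite_pos_lbound (R : realFieldType) (I : finType) (P : pred I) (F : I -> R) :
  (forall i, P i -> 0 < F i) ->
  exists e : R, [/\ 0 < e, e <= 1 & forall i, P i -> e < F i].
Proof.
move=> F_gt0; set S := \sum_(i | P i) (F i)^-1.
have S0 : 0 <= S by apply: sumr_ge0 => i Pi; rewrite invr_ge0 ltW ?F_gt0.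
have S1 : 0 < 1 + S by lra.
exists (1 + S)^-1; split; first by rewrite invr_gt0.
  by rewrite invf_le1 //; lra.
move=> i Pi; rewrite -ltf_pV2 ?posrE ?invr_gt0 ?F_gt0 // invrK.
have : (F i)^-1 <= S.
  by apply: (ler_sum_term (P := P) (F := fun j => (F j)^-1)) => // j Pj; rewrite invr_ge0 ltW ?F_gt0.
lra.
Qed.

Lemma exists_ord_neq n (j : 'I_n) : (1 < n)%N -> exists i : 'I_n, i != j.
Proof.
case: n j => [|[|n]] j // _.
exists (if j == ord0 then ord_max else ord0).
by case: (eqVneq j ord0) => [->|j_neq0] //; rewrite eq_sym.
Qed.

Section Gaussian.
Variables (R : realType) (d : nat).
Implicit Types (x mu : 'rV[R]_d) (s t : R).

Let half_dim_ge0 : 0 <= d%:R / 2 :> R.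
Proof. by rewrite divr_ge0 ?ler0n. Qed.

Lemma sqnorm_ge0 (v : 'rV[R]_d) : 0 <= sqnorm v.
Proof. by apply: sumr_ge0 => k _; rewrite sqr_ge0. Qed.

Lemma sqnorm_gt0 (v : 'rV[R]_d) : v != 0 -> 0 < sqnorm v.
Proof.
move=> v_neq0; rewrite lt_neqAle sqnorm_ge0 andbT eq_sym; apply: contra v_neq0.
move=> /eqP/(psumr_eq0P (fun k _ => sqr_ge0 (v ord0 k))) v0.
by apply/eqP/rowP => k; rewrite mxE; apply/eqP; rewrite -sqrf_eq0 v0.
Qed.

Lemma gaussE x mu s : 0 < s ->
  gauss x mu s = expR (- (d%:R / 2) * ln (2 * pi * s ^+ 2) - sqnorm (x - mu) / (2 * s ^+ 2)).
Proof.
move=> s0; rewrite /gauss /powR gt_eqF ?mulr_gt0 ?exprn_gt0 ?pi_gt0 //.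
by rewrite -expRD !mulNr.
Qed.

Lemma gauss_ge0 x mu s : 0 <= gauss x mu s.
Proof. by rewrite /gauss mulr_ge0 ?powR_ge0 ?expR_ge0. Qed.

Lemma gauss_gt0 x mu s : 0 < s -> 0 < gauss x mu s.
Proof. by move=> s0; rewrite gaussE // expR_gt0. Qed.

Lemma ln_gauss_center x s : 0 < s ->
  ln (gauss x x s) = - (d%:R / 2) * ln (2 * pi * s ^+ 2).
Proof.
move=> s0; rewrite gaussE // expRK subrr.
by rewrite /sqnorm big1 ?mul0r ?subr0 // => k _; rewrite mxE expr0n.
Qed.

Lemma gauss_le_normconst x mu s (eps : R) : 0 < eps -> eps <= s ->
  gauss x mu s <= (2 * pi * eps ^+ 2) `^ (- (d%:R / 2)).
Proof.
move=> eps0 le_eps_s; have s0 := lt_le_trans eps0 le_eps_s.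
rewrite gaussE // /powR gt_eqF ?mulr_gt0 ?exprn_gt0 ?pi_gt0 // ler_expR.
have ln_le : ln (2 * pi * eps ^+ 2) <= ln (2 * pi * s ^+ 2).
  rewrite ler_ln ?posrE ?mulr_gt0 ?exprn_gt0 ?pi_gt0 //.
  by rewrite ler_pM2l ?mulr_gt0 ?pi_gt0 // ler_pXn2r // nnegrE ltW.
have := ler_wpM2l half_dim_ge0 ln_le.
have : 0 <= sqnorm (x - mu) / (2 * s ^+ 2).
  by rewrite divr_ge0 ?sqnorm_ge0 ?mulr_ge0 ?exprn_ge0 ?ltW.
lra.
Qed.

Lemma ln_gauss_bwB x mu s t : 0 < s -> 0 < t ->
  ln (gauss x mu t) - ln (gauss x mu s) =
  sqnorm (x - mu) / 2 * (s ^- 2 - t ^- 2) - d%:R / 2 * ln (t ^+ 2 / s ^+ 2).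
Proof.
move=> s0 t0; rewrite !gaussE // !expRK.
have -> : 2 * pi * t ^+ 2 = (2 * pi * s ^+ 2) * (t ^+ 2 / s ^+ 2).
  by field; rewrite gt_eqF ?exprn_gt0.
rewrite lnM ?posrE ?mulr_gt0 ?divr_gt0 ?invr_gt0 ?exprn_gt0 ?pi_gt0 //.
by field; rewrite !gt_eqF.
Qed.

Lemma gauss_lt_bw x mu s t : 0 < s -> s < t -> d%:R * t ^+ 2 < sqnorm (x - mu) ->
  gauss x mu s < gauss x mu t.
Proof.
move=> s0 lt_st ltD; have t0 := lt_trans s0 lt_st.
rewrite -ltr_ln ?posrE ?gauss_gt0 // -subr_gt0 ln_gauss_bwB //.
set D := sqnorm (x - mu); set r := t ^+ 2 / s ^+ 2.
have lnr : ln r <= r - 1 by apply: ln_le_subr1; rewrite divr_gt0 ?exprn_gt0.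
have := ler_wpM2l half_dim_ge0 lnr.
suff : 0 < D / 2 * (s ^- 2 - t ^- 2) - d%:R / 2 * (r - 1) by lra.
have -> : D / 2 * (s ^- 2 - t ^- 2) - d%:R / 2 * (r - 1) =
          (t ^+ 2 - s ^+ 2) * (D - d%:R * t ^+ 2) / (2 * s ^+ 2 * t ^+ 2).
  by rewrite /r; field; rewrite !gt_eqF ?exprn_gt0.
by rewrite divr_gt0 ?mulr_gt0 ?exprn_gt0 ?subr_gt0 // ltr_pXn2r ?nnegrE ?ltW.
Qed.

Lemma gauss_le_opt_bw x mu s : (0 < d)%N -> 0 < s -> x != mu ->
  gauss x mu s <= gauss x mu (Num.sqrt (sqnorm (x - mu) / d%:R)).
Proof.
move=> d_gt0 s0 x_neq_mu; set D := sqnorm (x - mu).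
have D0 : 0 < D by rewrite sqnorm_gt0 ?subr_eq0.
have d0 : 0 < d%:R :> R by rewrite ltr0n.
set t := Num.sqrt _; have t0 : 0 < t by rewrite sqrtr_gt0 divr_gt0.
have t2 : t ^+ 2 = D / d%:R by rewrite sqr_sqrtr // divr_ge0 ?ltW.
rewrite -ler_ln ?posrE ?gauss_gt0 // -subr_ge0 ln_gauss_bwB // -/D.
set u := t ^+ 2 / s ^+ 2.
have lnu : ln u <= u - 1 by apply: ln_le_subr1; rewrite divr_gt0 ?exprn_gt0.
have := ler_wpM2l half_dim_ge0 lnu.
suff -> : D / 2 * (s ^- 2 - t ^- 2) = d%:R / 2 * (u - 1) by lra.
by rewrite /u t2; field; rewrite !gt_eqF ?exprn_gt0.
Qed.

Lemma ln_gauss_center_cvgy x : (0 < d)%N -> ln (gauss x x t) @[t --> 0^'+] --> +oo.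
Proof.
move=> d_gt0; have d0 : 0 < d%:R :> R by rewrite ltr0n.
apply/cvgryPge => A; near=> t.
have t0 : 0 < t by near: t; exact: nbhs_right_gt.
have lnt : ln t <= (- A - d%:R / 2 * ln (2 * pi)) / d%:R.
  by near: t; exact: (cvgrNyPle _).1 (@lnNy R) _.
rewrite ln_gauss_center // lnM ?posrE ?mulr_gt0 ?exprn_gt0 ?pi_gt0 // lnXn //.
suff -> : - (d%:R / 2) * (ln (2 * pi) + ln t *+ 2) = - (d%:R / 2 * ln (2 * pi)) - ln t * d%:R.
  by move: lnt; rewrite ler_pdivlMr //; lra.
by rewrite mulr2n; field.
Unshelve. all: by end_near.
Qed.

End Gaussian.

Section Likelihood.
Variables (R : realType) (d N : nat) (X : 'I_N -> 'rV[R]_d).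
Implicit Types (w s : 'I_N -> R).

Lemma adm_bw_set_bw s j t : adm_bw s -> 0 < t -> adm_bw (set_bw s j t).
Proof. by move=> s_gt0 t0 k; rewrite /set_bw; case: ifP. Qed.

Lemma ln_pkde_ge_center w s i : (forall j, 0 < w j) -> adm_bw s ->
  ln (w i) + ln (gauss (X i) (X i) (s i)) <= ln (pkde X w s (X i)).
Proof.
move=> w_gt0 s_gt0; have wg_gt0 := mulr_gt0 (w_gt0 i) (gauss_gt0 (X i) (X i) (s_gt0 i)).
rewrite -lnM ?posrE ?w_gt0 ?gauss_gt0 //.
have le_term : w i * gauss (X i) (X i) (s i) <= pkde X w s (X i).
  apply: (ler_sum_term (P := xpredT) (F := fun j => w j * gauss (X i) (X j) (s j))) => // j _.
  by rewrite mulr_ge0 ?gauss_ge0 ?ltW.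
by rewrite ler_ln ?posrE // (lt_le_trans wg_gt0).
Qed.

(* Each mixture is bounded below by its own-centre term, and the one at [X j'] blows up. *)
Lemma loglik_set_bw_cvgy w s j' : (0 < d)%N -> adm_weights w -> adm_bw s ->
  loglik X w (set_bw s j' t) @[t --> 0^'+] --> +oo.
Proof.
move=> d_gt0 [w_gt0 _] s_gt0.
set c := ln (w j') + \sum_(i | i != j') (ln (w i) + ln (gauss (X i) (X i) (s i))).
apply: (ger_cvgy _ (cvg_comp _ _ (ln_gauss_center_cvgy (X j') d_gt0) (cvg_addrl c))).
near=> t; have t0 : 0 < t by near: t; exact: nbhs_right_gt.
apply: le_trans (ler_sum _ (fun i _ => ln_pkde_ge_center i w_gt0 (adm_bw_set_bw j' s_gt0 t0))).
rewrite (bigD1 j') //= /set_bw eqxx /c addrAC lerD2l.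
by apply: ler_sum => i i_neq; rewrite (negbTE i_neq).
Unshelve. all: by end_near.
Qed.

Lemma loglik_le_normconst w s (eps : R) : 0 < eps -> adm_weights w -> (forall j, eps <= s j) ->
  loglik X w s <= (2 * pi * eps ^+ 2) `^ (- (d%:R / 2)) *+ N.
Proof.
move=> eps0 [w_gt0 sum_w] eps_le_s.
rewrite -[N in _ *+ N]card_ord -sumr_const; apply: ler_sum => i _.
apply: ln_mixture_le => [|j _||j _].
- exact: powR_ge0.
- exact: ltW.
- by rewrite sum_w.
- exact: gauss_le_normconst.
Qed.

Lemma loglik_cvgy_bw_lt (w s : nat -> 'I_N -> R) : (forall n, adm_weights (w n)) ->
  loglik X (w n) (s n) @[n --> \oo] --> +oo ->
  forall e, 0 < e -> \forall n \near \oo, exists j, s n j < e.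
Proof.
move=> w_adm L_cvgy e e0; near=> n; apply: contrapT => /forallNP s_ge_e.
have := @loglik_le_normconst (w n) (s n) e e0 (w_adm n).
have L_ge : (2 * pi * e ^+ 2) `^ (- (d%:R / 2)) *+ N + 1 <= loglik X (w n) (s n).
  by near: n; exact: (cvgryPge _).1 L_cvgy _.
suff /[swap]/[apply] : forall j, e <= s n j by lra.
by move=> j; rewrite leNgt; apply/negP; exact: s_ge_e.
Unshelve. all: by end_near.
Qed.

Definition opt_bw_gauss_sum : R :=
  \sum_(p : 'I_N * 'I_N | p.1 != p.2)
    gauss (X p.1) (X p.2) (Num.sqrt (sqnorm (X p.1 - X p.2) / d%:R)).

Lemma loglik_loo_le w s : (0 < d)%N -> injective X -> adm_weights w -> adm_bw s ->
  loglik_loo X w s <= opt_bw_gauss_sum *+ N.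
Proof.
move=> d_gt0 X_inj [w_gt0 sum_w] s_gt0.
rewrite -[N in _ *+ N]card_ord -sumr_const; apply: ler_sum => i _.
apply: ln_mixture_le => [|j _||j j_neq_i].
- by apply: sumr_ge0 => p _; exact: gauss_ge0.
- exact: ltW.
- by rewrite -sum_w [leRHS](bigD1 i) //= lerDr ltW.
apply: le_trans (gauss_le_opt_bw d_gt0 (s_gt0 j) _) _.
  by apply: contra_neq j_neq_i => /X_inj ->.
rewrite /opt_bw_gauss_sum; apply: (ler_sum_term (P := fun p : 'I_N * 'I_N => p.1 != p.2)
  (F := fun p => gauss (X p.1) (X p.2) (Num.sqrt (sqnorm (X p.1 - X p.2) / d%:R))) (i := (i, j))).
- by move=> p _; exact: gauss_ge0.
- by rewrite eq_sym.
Qed.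

(* The [j]-th leave-one-out term does not involve [s j]; every other one contains a
   Gaussian centred at [X j] whose bandwidth stays below its optimum, so it increases. *)
Lemma loglik_loo_lt_set_bw w s j t : (forall k, 0 < w k) -> adm_bw s -> s j < t ->
  (forall i, i != j -> d%:R * t ^+ 2 < sqnorm (X i - X j)) -> (exists i, i != j) ->
  loglik_loo X w s < loglik_loo X w (set_bw s j t).
Proof.
move=> w_gt0 s_gt0 lt_sj_t sep [i0 i0_neq_j].
set s' := set_bw s j t.
pose loo s i := \sum_(k | k != i) w k * gauss (X i) (X k) (s k).
have loo_j : loo s' j = loo s j.
  by apply: eq_bigr => k k_neq_j; rewrite /s' /set_bw (negbTE k_neq_j).
have loo_gt0 i : i != j -> 0 < loo s i.
  move=> i_neq_j; apply: lt_le_trans (mulr_gt0 (w_gt0 j) (gauss_gt0 (X i) (X j) (s_gt0 j))) _.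
  apply: (ler_sum_term (P := fun k => k != i) (F := fun k => w k * gauss (X i) (X k) (s k))).
  - by move=> k _; rewrite mulr_ge0 ?gauss_ge0 ?ltW.
  - by rewrite eq_sym.
have loo_lt i : i != j -> loo s i < loo s' i.
  move=> i_neq_j; rewrite /loo (bigD1 j) 1?eq_sym //= [ltRHS](bigD1 j) 1?eq_sym //=.
  apply: ltr_leD.
    rewrite ltr_pM2l // /s' /set_bw eqxx; exact: gauss_lt_bw (s_gt0 j) lt_sj_t (sep i i_neq_j).
  by apply: ler_sum => k /andP[_ k_neq_j]; rewrite /s' /set_bw (negbTE k_neq_j).
have ln_loo_lt i : i != j -> ln (loo s i) < ln (loo s' i).
  move=> i_neq_j; have lt_loo := loo_lt i i_neq_j; have loo0 := loo_gt0 i i_neq_j.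
  by rewrite ltr_ln ?posrE // (lt_trans loo0).
have ln_loo_le i : ln (loo s i) <= ln (loo s' i).
  by have [->|/ln_loo_lt/ltW//] := eqVneq i j; rewrite loo_j.
rewrite /loglik_loo (bigD1 i0) //= [ltRHS](bigD1 i0) //=.
apply: ltr_leD; first exact: ln_loo_lt.
by apply: ler_sum => i _; exact: ln_loo_le.
Qed.

Lemma loglik_loo_argmax_bw_ge : (0 < d)%N -> (1 < N)%N -> injective X ->
  exists eps : R, 0 < eps /\
    forall ws ss, adm_weights ws -> adm_bw ss ->
      (forall w s, adm_weights w -> adm_bw s -> loglik_loo X w s <= loglik_loo X ws ss) ->
      forall j, eps <= ss j.
Proof.
move=> d_gt0 N_gt1 X_inj; have d0 : 0 < d%:R :> R by rewrite ltr0n.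
have pair_gt0 (p : 'I_N * 'I_N) : p.1 != p.2 -> 0 < sqnorm (X p.1 - X p.2) / d%:R.
  move=> p_neq; rewrite divr_gt0 // sqnorm_gt0 // subr_eq0.
  by apply: contra_neq p_neq => /X_inj.
have [e [e0 e_le1 e_lt]] := finite_pos_lbound pair_gt0.
exists e; split => // ws ss ws_adm ss_gt0 ss_max j; rewrite leNgt; apply/negP => ss_lt_e.
have sep i : i != j -> d%:R * e ^+ 2 < sqnorm (X i - X j).
  move=> i_neq_j; have := e_lt (i, j) i_neq_j; rewrite ltr_pdivlMr //=; apply: le_lt_trans.
  by rewrite mulrC ler_wpM2r ?ler0n // expr2 ler_piMr // ltW.
have := ss_max ws _ ws_adm (adm_bw_set_bw j ss_gt0 e0); rewrite leNgt => /negP; apply.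
exact: loglik_loo_lt_set_bw (proj1 ws_adm) ss_gt0 ss_lt_e sep (exists_ord_neq j N_gt1).
Qed.

End Likelihood.

Theorem mainTheorem4 (R : realType) (d : nat) (hd : (0 < d)%N) :
  (forall (N : nat) (X : 'I_N -> 'rV[R]_d) (w s : 'I_N -> R) (j' : 'I_N),
     adm_weights w -> adm_bw s ->
     (fun t : R => loglik X w (set_bw s j' t)) @ 0^'+ --> +oo) /\
  (forall (N : nat) (eps : R), 0 < eps ->
     exists C : R, forall (X : 'I_N -> 'rV[R]_d) (w s : 'I_N -> R),
       adm_weights w -> adm_bw s -> (forall j, eps <= s j) ->
       loglik X w s <= C) /\
  (forall (N : nat) (X : 'I_N -> 'rV[R]_d) (w s : nat -> 'I_N -> R),
     (forall n, adm_weights (w n)) -> (forall n, adm_bw (s n)) ->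
     (fun n => loglik X (w n) (s n)) @ \oo --> +oo ->
     forall e : R, 0 < e -> \forall n \near \oo, exists j, s n j < e) /\
  (forall (N : nat) (X : 'I_N -> 'rV[R]_d), (2 <= N)%N -> injective X ->
     exists C : R, forall w s : 'I_N -> R,
       adm_weights w -> adm_bw s -> loglik_loo X w s <= C) /\
  (forall (N : nat) (X : 'I_N -> 'rV[R]_d), (2 <= N)%N -> injective X ->
     exists eps : R, 0 < eps /\
       forall ws ss : 'I_N -> R, adm_weights ws -> adm_bw ss ->
         (forall w s : 'I_N -> R, adm_weights w -> adm_bw s ->
            loglik_loo X w s <= loglik_loo X ws ss) ->
         forall j, eps <= ss j).
Proof.
split; first by move=> N X w s j' w_adm s_adm; exact: loglik_set_bw_cvgy.
split.
  move=> N eps eps0; exists ((2 * pi * eps ^+ 2) `^ (- (d%:R / 2)) *+ N).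
  by move=> X w s w_adm _; exact: loglik_le_normconst.
split; first by move=> N X w s w_adm _; exact: loglik_cvgy_bw_lt.
split; last by move=> N X; exact: loglik_loo_argmax_bw_ge.
move=> N X _ X_inj; exists (opt_bw_gauss_sum X *+ N) => w s.
exact: loglik_loo_le.
Qed.
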